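(* Let $\Gamma$ be a maximal consistent set of SBTrust, $\delta$ a propositional formula, and $(\Delta,\varphi,i)\in S_\Gamma$. Then (a) if $(\Delta,\varphi,i)\in\mathit{max}([\delta]_\Gamma)$, then $\Delta$ is $\delta$-likely for $\Gamma$; (b) if $\Delta$ is $\delta$-likely for $\Gamma$, then $(\Delta,\delta,i)\in\mathit{max}([\delta]_\Gamma)$.
   Context: $\mathcal{L}_T$: $\alpha::=\varphi\mid\varphi\rightsquigarrow\varphi\mid B(\alpha)\mid\alpha*\alpha\mid\neg\alpha$, with $\varphi$ ranging over classical propositional formulas (set $\mathcal{L}_{CL}$) and $*\in\{\land,\lor,\to,\leftrightarrow\}$. SBTrust is the Hilbert system ($\varphi,\psi,\chi,\varphi_i,\psi_i$ propositional; $\alpha,\beta\in\mathcal{L}_T$; rule outputs in $\mathcal{L}_T$): classical tautologies and Modus Ponens; $\varphi\rightsquigarrow\varphi$; $(\varphi\rightsquigarrow\bot)\to\neg\varphi$; $((\psi\land\chi)\rightsquigarrow\varphi)\to(\psi\rightsquigarrow(\chi\to\varphi))$; $(\neg(\varphi\leftrightarrow\psi)\rightsquigarrow\bot)\to((\varphi\rightsquigarrow\chi)\leftrightarrow(\psi\rightsquigarrow\chi))$; rule RCK: from $(\varphi_1\land\dots\land\varphi_n)\to\varphi_{n+1}$ infer $\bigwedge_{j\le n}(\psi\rightsquigarrow\varphi_j)\to(\psi\rightsquigarrow\varphi_{n+1})$; rule $\mathbf{S5_F}$: from $(\ell_1\land\dots\land\ell_n)\to\chi$ infer $(\ell_1\land\dots\land\ell_n)\to(\neg\chi\rightsquigarrow\bot)$,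 each $\ell_j$ being $\varphi_j\rightsquigarrow\psi_j$ or its negation, $\chi$ propositional; $B(\alpha\to\beta)\to(B\alpha\to B\beta)$; $B\alpha\to\neg B\neg\alpha$; $B\alpha\to BB\alpha$; necessitation for $B$. A maximal consistent set (MCS) is $\Gamma\subseteq\mathcal{L}_T$ with $\Gamma\nvdash\bot$ and, for each $\alpha$, $\alpha\in\Gamma$ or $\neg\alpha\in\Gamma$. For MCSs, $\Gamma\leftrightsquigarrow\Delta$ iff they contain the same formulas of the form $\chi\rightsquigarrow\psi$; $[\Gamma]_\leftrightsquigarrow$ is the equivalence class. $\rightsquigarrow_\varphi(\Gamma)=\{\psi:\varphi\rightsquigarrow\psi\in\Gamma\}$, and $\Delta$ is $\varphi$-likely for $\Gamma$ if $\rightsquigarrow_\varphi(\Gamma)\subseteq\Delta$. Let $S_\Gamma=[\Gamma]_\leftrightsquigarrow\times\mathcal{L}_{CL}\times\{0,1,2\}$ and $[\delta]_\Gamma=\{(\Delta,\varphi,i)\in S_\Gamma:\delta\in\Delta\}$. Define $\succeq_\Gamma\subseteq S_\Gamma\times S_\Gamma$ by: $(\Delta,\varphi,i)\succeq_\Gamma(\Omega,\psi,j)$ iff ($\Delta$ is $\varphi$-likely for $\Gamma$ and $\varphi\in\Omega$) or ($i=1,j=0$) or ($i=2,j=1$) or ($i=0,j=2$). For $X\subseteq S_\Gamma$, $\mathit{max}(X)=\{x\in X:\forall y\in X\,(y\succeq_\Gamma x\Rightarrow x\succeq_\Gamma y)\}$. *)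

From Stdlib Require Import List Bool.
Import ListNotations.
Set Implicit Arguments.

Inductive PL : Type :=
| PVar : nat -> PL
| PBot : PL
| PNeg : PL -> PL
| PAnd : PL -> PL -> PL
| POr  : PL -> PL -> PL
| PImp : PL -> PL -> PL
| PIff : PL -> PL -> PL.

Definition PTop : PL := PNeg PBot.

Inductive LT : Type :=
| TP   : PL -> LT
| Cond : PL -> PL -> LT
| Bel  : LT -> LT
| TNeg : LT -> LT
| TAnd : LT -> LT -> LT
| TOr  : LT -> LT -> LT
| TImp : LT -> LT -> LT
| TIff : LT -> LT -> LT.

Definition TBot : LT := TP PBot.
Definition TTop : LT := TP PTop.

Fixpoint evalPL (v : nat -> bool) (p : PL) : bool :=
  match p with
  | PVar n => v n
  | PBot => false
  | PNeg a => negb (evalPL v a)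
  | PAnd a b => evalPL v a && evalPL v b
  | POr a b => evalPL v a || evalPL v b
  | PImp a b => implb (evalPL v a) (evalPL v b)
  | PIff a b => eqb (evalPL v a) (evalPL v b)
  end.

Fixpoint evalLT (v : nat -> bool) (w : LT -> bool) (a : LT) : bool :=
  match a with
  | TP p => evalPL v p
  | Cond _ _ => w a
  | Bel _ => w a
  | TNeg x => negb (evalLT v w x)
  | TAnd x y => evalLT v w x && evalLT v w y
  | TOr x y => evalLT v w x || evalLT v w y
  | TImp x y => implb (evalLT v w x) (evalLT v w y)
  | TIff x y => eqb (evalLT v w x) (evalLT v w y)
  end.

(* Classical tautologies of L_T (i.e. instances of propositional tautologies). *)
Definition tautology (a : LT) : Prop := forall v w, evalLT v w a = true.

Definition pconj (l : list PL) : PL := fold_right PAnd PTop l.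
Definition tconj (l : list LT) : LT := fold_right TAnd TTop l.

Inductive cond_literal : LT -> Prop :=
| lit_pos : forall p q, cond_literal (Cond p q)
| lit_neg : forall p q, cond_literal (TNeg (Cond p q)).

Inductive Thm : LT -> Prop :=
| ax_taut : forall a, tautology a -> Thm a
| r_mp : forall a b, Thm (TImp a b) -> Thm a -> Thm b
| ax_id : forall p, Thm (Cond p p)
| ax_bot : forall p, Thm (TImp (Cond p PBot) (TP (PNeg p)))
| ax_ded : forall p q r,
    Thm (TImp (Cond (PAnd q r) p) (Cond q (PImp r p)))
| ax_lle : forall p q r,
    Thm (TImp (Cond (PNeg (PIff p q)) PBot) (TIff (Cond p r) (Cond q r)))
| r_rck : forall (ps : list PL) (pn q : PL),
    Thm (TP (PImp (pconj ps) pn)) ->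
    Thm (TImp (tconj (map (fun p => Cond q p) ps)) (Cond q pn))
| r_s5f : forall (ls : list LT) (chi : PL),
    (forall l, In l ls -> cond_literal l) ->
    Thm (TImp (tconj ls) (TP chi)) ->
    Thm (TImp (tconj ls) (Cond (PNeg chi) PBot))
| ax_K : forall a b, Thm (TImp (Bel (TImp a b)) (TImp (Bel a) (Bel b)))
| ax_D : forall a, Thm (TImp (Bel a) (TNeg (Bel (TNeg a))))
| ax_4 : forall a, Thm (TImp (Bel a) (Bel (Bel a)))
| r_nec : forall a, Thm a -> Thm (Bel a).

Definition set := LT -> Prop.

Definition imp_chain (l : list LT) (a : LT) : LT := fold_right TImp a l.

Definition Der (G : set) (a : LT) : Prop :=
  exists l, (forall g, In g l -> G g) /\ Thm (imp_chain l a).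

Definition MCS (G : set) : Prop :=
  ~ Der G TBot /\ forall a, G a \/ G (TNeg a).

Definition cond_equiv (G D : set) : Prop :=
  forall p q, G (Cond p q) <-> D (Cond p q).

Definition likely (G : set) (p : PL) (D : set) : Prop :=
  forall q, G (Cond p q) -> D (TP q).

Inductive idx3 : Type := i0 | i1 | i2.

Definition S_elt : Type := (set * PL * idx3)%type.

Definition inS (G : set) (x : S_elt) : Prop :=
  let '(D, _, _) := x in MCS D /\ cond_equiv G D.

Definition trset (G : set) (d : PL) (x : S_elt) : Prop :=
  inS G x /\ (let '(D, _, _) := x in D (TP d)).

Definition succeq (G : set) (x y : S_elt) : Prop :=
  let '(D, p, i) := x in
  let '(Om, _, j) := y in
  (likely G p D /\ Om (TP p))
  \/ (i = i1 /\ j = i0) \/ (i = i2 /\ j = i1) \/ (i = i0 /\ j = i2).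

Definition maxel (G : set) (X : S_elt -> Prop) (x : S_elt) : Prop :=
  X x /\ forall y, X y -> succeq G y x -> succeq G x y.

From Stdlib Require Import List Bool Arith Cantor Classical ClassicalEpsilon.
Import ListNotations.

(* Part (b) is immediate: [d ~> d] puts [d] in [Delta], and a
   [d]-likely world ranks above every world containing [d].  For part (a),
   the cyclic index component makes [(Omega, p, i+1)] rank above
   [(Delta, p, i)] for every [Omega] containing [d]; maximality of
   [(Delta, p, i)] then forces [Delta] to be [p]-likely and every such
   [Omega] to contain [p].  So [d <-> p /\ d] holds in every maximal
   consistent set with the conditionals of [Gamma], and rule S5_F (via a
   Lindenbaum argument) puts [~(d <-> p /\ d) ~> bot] in [Gamma].  Left
   logical equivalence and the deduction axiom then turn [d ~> q] into
   [p ~> (d -> q)], and [p]-likelihood of [Delta] yields [q] in [Delta]. *)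

Definition PL_eq_dec (p q : PL) : {p = q} + {p <> q}.
Proof. decide equality; apply Nat.eq_dec. Defined.

Definition LT_eq_dec (a b : LT) : {a = b} + {a <> b}.
Proof. decide equality; apply PL_eq_dec. Defined.

Definition pair_code (a b : nat) : nat := Cantor.to_nat (a, b).
Arguments pair_code : simpl never.

Lemma pair_code_inj a b c d : pair_code a b = pair_code c d -> a = c /\ b = d.
Proof.
  intro H.
  assert (E : Cantor.of_nat (pair_code a b) = Cantor.of_nat (pair_code c d))
    by now rewrite H.
  unfold pair_code in E; rewrite !Cantor.cancel_of_to in E.
  now injection E.
Qed.

Fixpoint code_PL (p : PL) : nat :=
  match p with
  | PVar n => pair_code 0 n
  | PBot => pair_code 1 0
  | PNeg a => pair_code 2 (code_PL a)
  | PAnd a b => pair_code 3 (pair_code (code_PL a) (code_PL b))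
  | POr a b => pair_code 4 (pair_code (code_PL a) (code_PL b))
  | PImp a b => pair_code 5 (pair_code (code_PL a) (code_PL b))
  | PIff a b => pair_code 6 (pair_code (code_PL a) (code_PL b))
  end.

Fixpoint code_LT (a : LT) : nat :=
  match a with
  | TP p => pair_code 0 (code_PL p)
  | Cond p q => pair_code 1 (pair_code (code_PL p) (code_PL q))
  | Bel x => pair_code 2 (code_LT x)
  | TNeg x => pair_code 3 (code_LT x)
  | TAnd x y => pair_code 4 (pair_code (code_LT x) (code_LT y))
  | TOr x y => pair_code 5 (pair_code (code_LT x) (code_LT y))
  | TImp x y => pair_code 6 (pair_code (code_LT x) (code_LT y))
  | TIff x y => pair_code 7 (pair_code (code_LT x) (code_LT y))
  end.

Ltac invert_pair_code :=
  repeat match goal with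
  | H : pair_code _ _ = pair_code _ _ |- _ => apply pair_code_inj in H; destruct H
  end.

Lemma code_PL_inj a b : code_PL a = code_PL b -> a = b.
Proof.
  revert b; induction a; destruct b; simpl; intro H; invert_pair_code;
    try discriminate; subst; f_equal; auto.
Qed.

Lemma code_LT_inj a b : code_LT a = code_LT b -> a = b.
Proof.
  revert b; induction a; destruct b; simpl; intro H; invert_pair_code;
    try discriminate; subst; f_equal; auto using code_PL_inj.
Qed.

Definition enum_LT (n : nat) : LT :=
  epsilon (inhabits TBot) (fun a => code_LT a = n).

Lemma enum_LT_surj a : exists n, enum_LT n = a.
Proof.
  exists (code_LT a); apply code_LT_inj.
  exact (epsilon_spec (inhabits TBot) (fun b => code_LT b = code_LT a)
           (ex_intro _ a eq_refl)).
Qed.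

Lemma evalLT_imp_chain v w l a :
  evalLT v w (imp_chain l a) = true <->
  ((forall g, In g l -> evalLT v w g = true) -> evalLT v w a = true).
Proof.
  induction l as [|g l IH]; simpl.
  - split; auto; intro H; apply H; intros _ [].
  - destruct (evalLT v w g) eqn:E; simpl.
    + rewrite IH; split.
      * intros H1 H2; apply H1; auto.
      * intros H1 H2; apply H1; intros g' [<-|Hg]; auto.
    + split; auto.
      intros _ H; rewrite H in E; [discriminate | now left].
Qed.

Lemma evalLT_tconj v w l :
  evalLT v w (tconj l) = true <-> forall g, In g l -> evalLT v w g = true.
Proof.
  induction l as [|g l IH]; simpl.
  - split; auto; intros _ _ [].
  - rewrite andb_true_iff, IH; split.
    + intros [H1 H2] g' [<-|Hg]; auto.
    + auto.
Qed.

Lemma tautology_imp_chain l a :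
  (forall v w, (forall g, In g l -> evalLT v w g = true) -> evalLT v w a = true) ->
  tautology (imp_chain l a).
Proof. intros H v w; apply evalLT_imp_chain, H. Qed.

Lemma Thm_sem {a b} :
  Thm a -> (forall v w, evalLT v w a = true -> evalLT v w b = true) -> Thm b.
Proof.
  intros Ha H; apply (r_mp (a := a)); auto.
  apply ax_taut, (tautology_imp_chain [a]); intros v w Hl; apply H, Hl; now left.
Qed.

Lemma Thm_sem2 {a b c} :
  Thm a -> Thm b ->
  (forall v w, evalLT v w a = true -> evalLT v w b = true -> evalLT v w c = true) ->
  Thm c.
Proof.
  intros Ha Hb H; refine (r_mp (r_mp (ax_taut _) Ha) Hb).
  apply (tautology_imp_chain [a; b]); intros v w Hl.
  apply H; apply Hl; simpl; auto.
Qed.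

Definition add (S : set) (a : LT) : set := fun x => S x \/ x = a.

Lemma Der_thm G {a} : Thm a -> Der G a.
Proof. intro H; exists []; split; auto; intros _ []. Qed.

Lemma Der_in {G a} : G a -> Der G a.
Proof.
  intro H; exists [a]; split.
  - intros g [<-|[]]; auto.
  - apply ax_taut, tautology_imp_chain; intros v w Hl; apply Hl; now left.
Qed.

Lemma Thm_imp_chain_incl {l} l' {a} :
  Thm (imp_chain l a) -> incl l l' -> Thm (imp_chain l' a).
Proof.
  intros H I; apply (Thm_sem H); intros v w.
  rewrite !evalLT_imp_chain; auto.
Qed.

Lemma Der_sem2 {G a b c} :
  Der G a -> Der G b ->
  (forall v w, evalLT v w a = true -> evalLT v w b = true -> evalLT v w c = true) ->
  Der G c.
Proof.
  intros [l1 [H1 T1]] [l2 [H2 T2]] H; exists (l1 ++ l2); split.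
  - intros g Hg; apply in_app_or in Hg as [Hg|Hg]; auto.
  - apply (Thm_sem2 (Thm_imp_chain_incl (l1 ++ l2) T1 (incl_appl _ (incl_refl _)))
                    (Thm_imp_chain_incl (l1 ++ l2) T2 (incl_appr _ (incl_refl _)))).
    intros v w; rewrite !evalLT_imp_chain.
    intros A B C; apply H; auto.
Qed.

Lemma deduction {S a b} : Der (add S a) b -> Der S (TImp a b).
Proof.
  intros [l [H T]]; exists (remove LT_eq_dec a l); split.
  - intros g Hg; apply in_remove in Hg as [Hg Hne].
    destruct (H g Hg); [auto|contradiction].
  - apply (Thm_sem T); intros v w; rewrite !evalLT_imp_chain; simpl.
    intros A B; destruct (evalLT v w a) eqn:Ea; simpl; auto.
    apply A; intros g Hg.
    destruct (LT_eq_dec g a) as [->|Hne]; auto using in_in_remove.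
Qed.

Fixpoint lindenbaum_chain (S : set) (n : nat) : set :=
  match n with
  | 0 => S
  | Datatypes.S m =>
      let C := lindenbaum_chain S m in
      if excluded_middle_informative (Der (add C (enum_LT m)) TBot)
      then add C (TNeg (enum_LT m))
      else add C (enum_LT m)
  end.

Lemma lindenbaum_chain_mono S m n x :
  m <= n -> lindenbaum_chain S m x -> lindenbaum_chain S n x.
Proof.
  induction 1 as [|n _ IH]; auto; intro Hx; simpl.
  destruct excluded_middle_informative; left; auto.
Qed.

Lemma consistent_add_or_neg C a :
  ~ Der C TBot -> Der (add C a) TBot -> ~ Der (add C (TNeg a)) TBot.
Proof.
  intros N Da Dna; apply N.
  apply (Der_sem2 (deduction Da) (deduction Dna)); intros v w; simpl.
  destruct (evalLT v w a); auto.
Qed.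

Lemma lindenbaum_chain_consistent {S} n :
  ~ Der S TBot -> ~ Der (lindenbaum_chain S n) TBot.
Proof.
  intro N; induction n as [|n IH]; simpl; auto.
  destruct excluded_middle_informative; auto using consistent_add_or_neg.
Qed.

Lemma lindenbaum_chain_incl_list S (l : list LT) :
  (forall g, In g l -> exists n, lindenbaum_chain S n g) ->
  exists n, forall g, In g l -> lindenbaum_chain S n g.
Proof.
  induction l as [|g l IH]; intro H.
  - exists 0; intros _ [].
  - destruct IH as [m Hm]; [intros; apply H; now right|].
    destruct (H g (or_introl eq_refl)) as [k Hk].
    exists (m + k); intros g' [<-|Hg].
    + apply lindenbaum_chain_mono with k; auto with arith.
    + apply lindenbaum_chain_mono with m; auto with arith.
Qed.

Lemma lindenbaum {S} : ~ Der S TBot -> exists Om, MCS Om /\ forall x, S x -> Om x.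
Proof.
  intro N; exists (fun x => exists n, lindenbaum_chain S n x); split; [split|].
  - intros [l [Hl T]].
    destruct (lindenbaum_chain_incl_list S l Hl) as [n Hn].
    apply (lindenbaum_chain_consistent n N); exists l; auto.
  - intro a; destruct (enum_LT_surj a) as [n <-].
    destruct (excluded_middle_informative
                (Der (add (lindenbaum_chain S n) (enum_LT n)) TBot)) eqn:E;
      [right|left]; exists (Datatypes.S n); simpl; rewrite E; now right.
  - intros x Hx; now exists 0.
Qed.

Section MaximalConsistent.

Context {G : set}.
Hypothesis MG : MCS G.

Lemma mcs_der {a} : Der G a -> G a.
Proof.
  intro H; destruct (proj2 MG a) as [Ha|Ha]; auto.
  exfalso; apply (proj1 MG), (Der_sem2 H (Der_in Ha)); intros v w; simpl.
  now intros ->.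
Qed.

Lemma mcs_thm {a} : Thm a -> G a.
Proof. intro H; apply mcs_der, Der_thm, H. Qed.

Lemma mcs_not_bot : ~ G TBot.
Proof. intro H; apply (proj1 MG), Der_in, H. Qed.

Lemma mcs_sem1 {a b} :
  G a -> (forall v w, evalLT v w a = true -> evalLT v w b = true) -> G b.
Proof.
  intros Ha H; apply mcs_der, (Der_sem2 (Der_in Ha) (Der_in Ha)); auto.
Qed.

Lemma mcs_sem2 {a b c} :
  G a -> G b ->
  (forall v w, evalLT v w a = true -> evalLT v w b = true -> evalLT v w c = true) ->
  G c.
Proof. intros Ha Hb H; apply mcs_der, (Der_sem2 (Der_in Ha) (Der_in Hb) H). Qed.

Lemma mcs_mp {a b} : G (TImp a b) -> G a -> G b.
Proof.
  intros Hab Ha; apply (mcs_sem2 Hab Ha); intros v w; simpl.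
  intros H Ha'; rewrite Ha' in H; exact H.
Qed.

Lemma mcs_tconj l : (forall g, In g l -> G g) -> G (tconj l).
Proof.
  intro H; apply mcs_der; exists l; split; auto.
  apply ax_taut, tautology_imp_chain; intros v w; apply evalLT_tconj.
Qed.

End MaximalConsistent.

Definition cond_literals (G : set) : set := fun x => G x /\ cond_literal x.

(* The Lindenbaum extension of the conditional literals of [G] and [~chi]
   agrees with [G] on conditionals because [G] decides every one of them. *)
Lemma mcs_cond_bot_of_forall {G chi} :
  MCS G ->
  (forall Om, MCS Om -> cond_equiv G Om -> Om (TP chi)) ->
  G (Cond (PNeg chi) PBot).
Proof.
  intros MG Hchi.
  destruct (classic (Der (add (cond_literals G) (TP (PNeg chi))) TBot))
    as [HD|HN].
  - destruct (deduction HD) as [l [Hl T]].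
    assert (Tl : Thm (TImp (tconj l) (TP chi))).
    { apply (Thm_sem T); intros v w; rewrite evalLT_imp_chain, <- evalLT_tconj.
      simpl; destruct (evalLT v w (tconj l)); simpl; auto.
      intro H; specialize (H eq_refl); destruct (evalPL v chi); auto. }
    apply (mcs_mp MG (mcs_thm MG (r_s5f l (fun g Hg => proj2 (Hl g Hg)) Tl))).
    apply (mcs_tconj MG); intros g Hg; apply Hl, Hg.
  - exfalso; destruct (lindenbaum HN) as [Om [MO HO]].
    assert (EO : cond_equiv G Om).
    { intros a b; split; intro H.
      - apply HO; left; split; [auto|constructor].
      - destruct (proj2 MG (Cond a b)) as [|Hn]; auto; exfalso.
        apply (mcs_not_bot MO), (mcs_sem2 MO H (HO _ (or_introl (conj Hn (lit_neg a b))))).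
        intros v w; simpl; now intros ->. }
    apply (mcs_not_bot MO), (mcs_sem2 MO (Hchi Om MO EO) (HO _ (or_intror eq_refl))).
    intros v w; simpl; now intros ->.
Qed.

Lemma mcs_cond_restrict {G p d q} :
  MCS G ->
  G (Cond (PNeg (PIff d (PAnd p d))) PBot) ->
  G (Cond d q) -> G (Cond p (PImp d q)).
Proof.
  intros MG Hbot Hdq.
  apply (mcs_mp MG (mcs_thm MG (ax_ded q p d))).
  apply (mcs_sem2 MG (mcs_mp MG (mcs_thm MG (ax_lle d (PAnd p d) q)) Hbot) Hdq).
  intros v w; simpl.
  now destruct (w (Cond d q)), (w (Cond (PAnd p d) q)).
Qed.

Lemma likely_self {G D d} : MCS G -> likely G d D -> D (TP d).
Proof. intros MG L; apply L, (mcs_thm MG), ax_id. Qed.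

Definition idx_succ (i : idx3) : idx3 :=
  match i with i0 => i1 | i1 => i2 | i2 => i0 end.

Lemma succeq_idx_succ {G D Om p q i} : succeq G (D, p, idx_succ i) (Om, q, i).
Proof. right; destruct i; simpl; auto. Qed.

Lemma succeq_idx_pred {G D Om p} q i :
  succeq G (D, p, i) (Om, q, idx_succ i) -> likely G p D /\ Om (TP p).
Proof.
  intros [H|H]; auto.
  exfalso; destruct i; simpl in H; intuition discriminate.
Qed.

Lemma maxel_dominates {G X D p i} Om q :
  maxel G X (D, p, i) -> X (Om, q, idx_succ i) -> likely G p D /\ Om (TP p).
Proof.
  intros [_ Hmax] HX.
  apply (succeq_idx_pred q i), Hmax; auto using succeq_idx_succ.
Qed.

Theorem corollary1 :
  forall (G : set) (d : PL) (D : set) (p : PL) (i : idx3),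
    MCS G ->
    inS G (D, p, i) ->
    (maxel G (trset G d) (D, p, i) -> likely G d D) /\
    (likely G d D -> maxel G (trset G d) (D, d, i)).
Proof.
  intros G d D p i MG [MD ED]; split.
  - intro Hmax.
    assert (Dd : D (TP d)) by apply (proj2 (proj1 Hmax)).
    assert (Lp : likely G p D).
    { refine (proj1 (maxel_dominates D p Hmax _)); now split. }
    assert (Hchi : forall Om, MCS Om -> cond_equiv G Om ->
                              Om (TP (PIff d (PAnd p d)))).
    { intros Om MO EO; destruct (proj2 MO (TP d)) as [Od|Ond].
      - assert (Op : Om (TP p)).
        { refine (proj2 (maxel_dominates Om p Hmax _)); now split. }
        apply (mcs_sem2 MO Od Op); intros v w; simpl.
        now intros -> ->.
      - apply (mcs_sem1 MO Ond); intros v w; simpl.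
        destruct (evalPL v d), (evalPL v p); simpl; congruence. }
    intros q Gq.
    apply (mcs_sem2 MD (Lp _ (mcs_cond_restrict MG (mcs_cond_bot_of_forall MG Hchi) Gq)) Dd).
    intros v w; simpl; intros H Hd; rewrite Hd in H; exact H.
  - intro L; split; [split; [now split | apply (likely_self MG L)]|].
    intros [[Om q] j] [_ Od] _; left; auto.
Qed.
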